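(* For every $l\in\mathbb N$, the intersection of the real curve $\Gamma_l(\mathbb R)=\{(\lambda,\mu)\in\mathbb R^2: P_l(\lambda,\mu^2)=0\}$ with the open half-plane $\{\mu>0\}$ consists of $l$ pairwise non-intersecting smooth curves, none of which has a horizontal tangent line $\{\mu=\mathrm{const}\}$.
   Context: For $l\in\mathbb N$ and $\mu\in\mathbb C$, $H_l$ is the tridiagonal $l\times l$ matrix with entries $H_{l;jj}=(1-j)(l-j+1)$, $H_{l;j,j+1}=\mu j$, $H_{l;j,j-1}=\mu(l-j+1)$, and $H_{l;ij}=0$ if $|i-j|\geq 2$. It is known that $\det(H_l+\lambda\,\mathrm{Id})$ is a polynomial of degree $l$ in $(\lambda,\mu^2)$, written $P_l(\lambda,\mu^2)$. *)

From HB Require Import structures.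
From mathcomp Require Import all_boot all_order all_algebra.
From mathcomp Require Import all_classical all_reals all_analysis.
Set Implicit Arguments. Unset Strict Implicit. Unset Printing Implicit Defensive.
Import Order.TTheory GRing.Theory Num.Theory.
Local Open Scope ring_scope.

(* H_l as an l x l matrix with parameter mu; 0-based index i corresponds to
   the paper's j = i+1:
     H_{jj}     = (1-j)(l-j+1) = - i (l - i)
     H_{j,j+1}  = mu j         = mu (i+1)
     H_{j,j-1}  = mu (l-j+1)   = mu (l-i)
     other entries 0. *)
Definition Hmx (R : comRingType) (l : nat) (mu : R) : 'M[R]_l :=
  \matrix_(i < l, k < l)
    if k == i then - ((i * (l - i))%N%:R)
    else if k == i.+1 :> nat then mu * (i.+1)%:R
    else if i == k.+1 :> nat then mu * (l - i)%N%:R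
    else 0.

Definition Ppoly (R : comRingType) (l : nat) (mu : R) : {poly R} :=
  \det ('X%:M + map_mx polyC (Hmx l mu)).

(* F(lambda, mu) = P_l(lambda, mu^2) = det(H_l(mu) + lambda Id). *)
Definition Pl (R : comRingType) (l : nat) (lam mu : R) : R :=
  \det (Hmx l mu + lam%:M).

Definition dPl_dlam (R : comRingType) (l : nat) (lam mu : R) : R :=
  (Ppoly l mu)^`().[lam].

From HB Require Import structures.
From mathcomp Require Import all_boot all_order all_algebra.
From mathcomp Require Import all_classical all_reals all_analysis.
From mathcomp Require Import polyrcf ring lra zify.
Import Order.TTheory GRing.Theory Num.Theory.
Set Implicit Arguments. Unset Strict Implicit. Unset Printing Implicit Defensive.
Import numFieldNormedType.Exports.
Local Open Scope classical_set_scope.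
Local Open Scope ring_scope.

(* Expanding det (H_l(mu) + lambda) along its last row gives a three-term
   recurrence q_(k+2) = (lambda + a_(k+1)) q_(k+1) - b_k q_k for the leading
   principal minors, with b_k = mu^2 (k+1) (l-k-1) > 0 when mu > 0.  The
   classical interlacing argument then shows that q_k has k simple real roots,
   separated by those of q_(k-1); so for mu > 0 the polynomial P_l(., mu^2) has
   l simple real roots lambda_0(mu) < ... < lambda_(l-1)(mu).  A sign change of
   P_l across each root persists under small changes of mu, so the roots are
   continuous in mu; implicit differentiation of P_l(lambda_i(mu), mu^2) = 0
   then shows by induction that every derivative of lambda_i is a polynomial in
   (lambda_i, mu) divided by a power of the nonvanishing d/dlambda P_l. *)

Section PolyOfRoots.
Variable R : rcfType.
Implicit Types (s t : seq R) (p : {poly R}) (x : R).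

Definition poly_of_roots s : {poly R} := \prod_(r <- s) ('X - r%:P).

Lemma poly_of_roots_monic s : poly_of_roots s \is monic.
Proof. exact: monic_prod_XsubC. Qed.

Lemma size_poly_of_roots s : size (poly_of_roots s) = (size s).+1.
Proof. exact: size_prod_XsubC. Qed.

Lemma root_poly_of_roots s x : root (poly_of_roots s) x = (x \in s).
Proof. exact: root_prod_XsubC. Qed.

Lemma poly_of_roots_gt0 s x : all (< x) s -> 0 < (poly_of_roots s).[x].
Proof.
rewrite /poly_of_roots; elim: s => [|r s IH] /=; first by rewrite big_nil hornerC.
case/andP=> rx /IH; rewrite big_cons hornerM hornerXsubC.
by apply: mulr_gt0; rewrite subr_gt0.
Qed.

Lemma poly_of_roots_sign_gt s x :
  all (> x) s -> 0 < (-1) ^+ size s * (poly_of_roots s).[x].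
Proof.
rewrite /poly_of_roots; elim: s => [|r s IH] /=; first by rewrite big_nil hornerC mul1r.
case/andP=> xr /IH; rewrite big_cons hornerM hornerXsubC exprS mulrACA mulN1r opprB.
by apply: mulr_gt0; rewrite subr_gt0.
Qed.

Lemma poly_of_roots_sign_between s x j : sorted <%R s -> (j <= size s)%N ->
  ((0 < j)%N -> s`_j.-1 < x) -> ((j < size s)%N -> x < s`_j) ->
  0 < (-1) ^+ (size s - j) * (poly_of_roots s).[x].
Proof.
move=> ss js lo hi.
have le_nth i k : (i <= k < size s)%N -> s`_i <= s`_k.
  by case/andP=> ik ks; rewrite (lt_sorted_leq_nth 0 ss) // inE (leq_ltn_trans ik).
have take_lt : all (< x) (take j s).
  apply/(all_nthP 0) => i; rewrite size_takel // => ij; rewrite nth_take //.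
  have j_gt0 : (0 < j)%N by lia.
  by apply: le_lt_trans (lo j_gt0); apply: le_nth; lia.
have drop_gt : all (> x) (drop j s).
  apply/(all_nthP 0) => i; rewrite size_drop nth_drop ltn_subRL => ijs.
  have js' : (j < size s)%N by apply: leq_ltn_trans ijs; rewrite leq_addr.
  by apply: lt_le_trans (hi js') (le_nth _ _ _); rewrite leq_addr.
have -> : poly_of_roots s = poly_of_roots (take j s) * poly_of_roots (drop j s).
  by rewrite /poly_of_roots -big_cat cat_take_drop.
rewrite hornerM mulrCA -(size_drop j s).
by apply: mulr_gt0; [exact: poly_of_roots_gt0 | exact: poly_of_roots_sign_gt].
Qed.

Lemma deriv_poly_of_roots_neq0 s x :
  uniq s -> x \in s -> (poly_of_roots s)^`().[x] != 0.
Proof.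
rewrite /poly_of_roots; elim: s => [|r s IH] //= /andP[rs us].
rewrite big_cons derivM derivXsubC mul1r hornerD hornerM hornerXsubC in_cons.
rewrite -/(poly_of_roots s); case/predU1P => [->|xs].
  by rewrite subrr mul0r addr0 -/(root _ _) root_poly_of_roots.
have /rootP -> : root (poly_of_roots s) x by rewrite root_poly_of_roots.
by rewrite add0r mulf_neq0 ?IH // subr_eq0; apply: contraNneq rs => <-.
Qed.

Lemma poly_of_roots_eq p t : p \is monic -> size p = (size t).+1 ->
  all (root p) t -> uniq t -> p = poly_of_roots t.
Proof.
move=> /monicP mp sp rt ut.
by rewrite [LHS](all_roots_prod_XsubC sp rt) ?uniq_rootsE // mp scale1r.
Qed.

Lemma rootsR_poly_of_roots s : sorted <%R s -> rootsR (poly_of_roots s) = s.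
Proof.
move=> ss; have nz : poly_of_roots s != 0 by rewrite monic_neq0 ?poly_of_roots_monic.
apply: (irr_sorted_eq lt_trans ltxx) => //; first exact: sorted_roots.
by move=> x; rewrite -[RHS]root_poly_of_roots (roots_onP (roots_on_rootsR nz)) ?in_itv.
Qed.

End PolyOfRoots.

Lemma sorted_gap (R : realFieldType) (s : seq R) (e : R) : 0 < e -> sorted <%R s ->
  exists d, [/\ 0 < d, d <= e & forall j, (j.+1 < size s)%N -> s`_j + d < s`_j.+1 - d].
Proof.
move=> e_gt0; elim: s => [|x [|y s] IH] /= ss; [by exists e | by exists e |].
have [xy ys] := andP ss; have [d [d_gt0 d_le gap]] := IH ys.
have xy3 : 0 < (y - x) / 3 by rewrite divr_gt0 // subr_gt0.
exists (Num.min d ((y - x) / 3)); split; rewrite ?lt_min ?d_gt0 ?ge_min ?d_le //.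
have m_le_d : Num.min d ((y - x) / 3) <= d by rewrite ge_min lexx.
have m_le_xy : Num.min d ((y - x) / 3) <= (y - x) / 3 by rewrite ge_min lexx orbT.
by move: (Num.min _ _) m_le_d m_le_xy => m m_le_d m_le_xy [_|j /gap] /=; lra.
Qed.

Section SignChanges.
Variable R : rcfType.
Implicit Types (s : seq R) (p : {poly R}).

Lemma alternating_mul_lt0 (m : nat) (x y : R) :
  0 < (-1) ^+ m.+1 * x -> 0 < (-1) ^+ m * y -> x * y < 0.
Proof.
move=> hx hy; have := mulr_gt0 hx hy.
have -> : (-1) ^+ m.+1 * x * ((-1) ^+ m * y) = - ((x * y) * ((-1) ^+ m) ^+ 2).
  by rewrite exprS; ring.
by rewrite sqrr_sign mulr1 oppr_gt0.
Qed.

Lemma poly_of_roots_box_sign s (d : R) j : 0 < d -> sorted <%R s ->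
  (forall i, (i.+1 < size s)%N -> s`_i + d < s`_i.+1 - d) -> (j < size s)%N ->
  (poly_of_roots s).[s`_j - d] * (poly_of_roots s).[s`_j + d] < 0.
Proof.
move=> d_gt0 ss gap js.
apply: (alternating_mul_lt0 (m := size s - j.+1)); rewrite ?subnSK //.
- apply: poly_of_roots_sign_between => //; [exact: ltnW | move=> j_gt0 |].
    have := gap j.-1; rewrite prednK // => /(_ js); apply: lt_trans.
    by rewrite ltrDl.
  by rewrite gtrDl oppr_lt0.
- apply: poly_of_roots_sign_between => // [_|j1s]; first by rewrite ltrDl.
  by apply: lt_trans (gap j j1s) _; rewrite gtrDl oppr_lt0.
Qed.

Lemma roots_between p (lo hi : nat -> R) n :
  (forall j, (j < n)%N -> lo j < hi j /\ p.[lo j] * p.[hi j] < 0) ->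
  (forall j, (j.+1 < n)%N -> hi j <= lo j.+1) ->
  exists2 t, [/\ size t = n, sorted <%R t & all (root p) t] &
    forall j, (j < n)%N -> lo j < t`_j < hi j.
Proof.
move=> sign_change disjoint.
have /choice[g hg] : forall j, exists x, (j < n)%N -> lo j < x < hi j /\ root p x.
  move=> j; case: (ltnP j n) => [jn|]; last by exists 0.
  have [/ltW lohi sgn] := sign_change j jn.
  by have [x] := poly_ivtoo lohi sgn; rewrite in_itv /= => xin rx; exists x.
exists (mkseq g n) => [|j jn]; last by rewrite nth_mkseq //; case: (hg j jn).
split; first exact: size_mkseq.
- apply/(sortedP 0) => j; rewrite size_mkseq => jn; rewrite !nth_mkseq ?(ltnW jn) //.
  have [/andP[_ gj] _] := hg j (ltnW jn); have [/andP[gj1 _] _] := hg j.+1 jn.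
  exact: lt_trans gj (le_lt_trans (disjoint j jn) gj1).
- apply/(all_nthP 0) => j; rewrite size_mkseq => jn; rewrite nth_mkseq //.
  by case: (hg j jn).
Qed.

Lemma poly_of_roots_in_boxes s (lo hi : nat -> R) : sorted <%R s ->
  (forall j, (j < size s)%N ->
     lo j < hi j /\ (poly_of_roots s).[lo j] * (poly_of_roots s).[hi j] < 0) ->
  (forall j, (j.+1 < size s)%N -> hi j <= lo j.+1) ->
  forall j, (j < size s)%N -> lo j < s`_j < hi j.
Proof.
move=> ss sign_change disjoint.
have [t [st ts rt] tbox] := roots_between sign_change disjoint.
suff -> : s = t by rewrite st.
rewrite -(rootsR_poly_of_roots ss) -(rootsR_poly_of_roots ts); congr rootsR.
apply: poly_of_roots_eq; rewrite ?poly_of_roots_monic ?size_poly_of_roots ?st //.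
exact: lt_sorted_uniq.
Qed.

Lemma monic_gt0_right p (m : R) : p \is monic -> exists2 U, m < U & 0 < p.[U].
Proof.
move=> /monicP lp; have lp_gt0 : 0 < lead_coef p by rewrite lp.
have [n hn] := poly_pinfty_gt_lc lp_gt0.
exists (Num.max n (m + 1)); first by rewrite lt_max ltrDl ltr01 orbT.
by apply: (lt_le_trans lp_gt0); apply: hn; rewrite le_max lexx.
Qed.

Lemma monic_sign_left p (m : R) : p \is monic ->
  exists2 L, L < m & 0 < (-1) ^+ (size p).-1 * p.[L].
Proof.
move=> mp; set q := (-1) ^+ (size p).-1 *: (p \Po - 'X).
have mq : q \is monic.
  apply/monicP; rewrite lead_coefZ lead_coef_comp ?size_polyN ?size_polyX //.
  by rewrite lead_coefN lead_coefX (monicP mp) mul1r -expr2 sqrr_sign.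
have [U mU qU] := monic_gt0_right (- m) mq.
exists (- U); first by rewrite ltrNl.
by move: qU; rewrite hornerZ horner_comp hornerN hornerX.
Qed.

End SignChanges.

(** * Interlacing for three-term recurrences *)

Section ThreeTermRecurrence.
Variables (R : rcfType) (a b : nat -> R) (q : nat -> {poly R}) (n : nat).
Hypotheses (q0 : q 0 = 1) (q1 : q 1 = 'X + (a 0)%:P)
  (qSS : forall k, (k.+2 <= n)%N ->
     q k.+2 = ('X + (a k.+1)%:P) * q k.+1 - (b k)%:P * q k)
  (b_gt0 : forall k, (k.+2 <= n)%N -> 0 < b k).

Lemma monic_size_recurrence k : (k <= n)%N -> q k \is monic /\ size (q k) = k.+1.
Proof.
elim/ltn_ind: k => -[|[|k]] IH kn; first by rewrite q0 monic1 size_poly1.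
  by rewrite q1 monicXaddC size_XaddC.
have [mq1 sq1] := IH k.+1 (ltnSn _) (ltnW kn).
have [_ sq0] := IH k (leqnSn _) (ltnW (ltnW kn)).
have size_main : size (('X + (a k.+1)%:P) * q k.+1) = k.+3.
  by rewrite size_Mmonic ?monicXaddC ?sq1 ?size_XaddC // -size_poly_eq0 size_XaddC.
have size_rest : (size (- ((b k)%:P * q k)) < k.+3)%N.
  rewrite size_polyN (leq_ltn_trans (size_polyMleq _ _)) // size_polyC sq0.
  by case: (_ != _); lia.
rewrite qSS //; split; last by rewrite size_polyDl size_main.
apply/monicP; rewrite lead_coefDl ?size_main //.
by rewrite lead_coefM lead_coefXaddC (monicP mq1) mulr1.
Qed.

(* The sign condition says that the roots of q_k separate those of q_(k+1). *)
Definition interlacing k := exists2 s, sorted <%R s &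
  [/\ size s = k.+1, q k.+1 = poly_of_roots s &
      forall j, (j <= k)%N -> 0 < (-1) ^+ (k - j) * (q k).[s`_j]].

Lemma interlacing0 : interlacing 0.
Proof.
exists [:: - a 0] => //; split => //.
  by rewrite q1 /poly_of_roots big_seq1 polyCN opprK.
by case=> // _; rewrite q0 hornerC mulr1.
Qed.

Lemma interlacingS k : (k.+2 <= n)%N -> interlacing k -> interlacing k.+1.
Proof.
move=> kn [s ss [sz qs alt]]; set Q := q k.+2.
have [mQ sQ] := monic_size_recurrence kn.
have nth_lt i j : (i < j <= k)%N -> s`_i < s`_j.
  case/andP=> ij jk; rewrite (lt_sorted_ltn_nth 0 ss) ?inE ?sz //; lia.
have Q_at_s j : (j <= k)%N -> 0 < (-1) ^+ (k.+1 - j) * Q.[s`_j].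
  move=> jk; have /rootP qs0 : root (q k.+1) s`_j.
    by rewrite qs root_poly_of_roots mem_nth ?sz.
  rewrite /Q qSS // hornerD hornerN !hornerM qs0 mulr0 add0r hornerC subSn // exprS.
  by rewrite mulN1r mulNr mulrN opprK mulrCA; apply: mulr_gt0 (b_gt0 kn) (alt j jk).
have [L Ls QL] := monic_sign_left s`_0 mQ; rewrite sQ /= in QL.
have [U sU QU] := monic_gt0_right s`_k mQ.
pose lo j := if j is i.+1 then s`_i else L.
pose hi j := if (j <= k)%N then s`_j else U.
have lo_sign j : (j <= k.+1)%N -> 0 < (-1) ^+ (k.+2 - j) * Q.[lo j].
  by case: j => [|j] //= /Q_at_s.
have hi_sign j : (j <= k.+1)%N -> 0 < (-1) ^+ (k.+1 - j) * Q.[hi j].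
  rewrite /hi leq_eqVlt ltnS; case: eqP => [-> _|_ /= jk]; last by rewrite jk Q_at_s.
  by rewrite ltnn subnn mul1r.
have boxes j : (j < k.+2)%N -> lo j < hi j /\ Q.[lo j] * Q.[hi j] < 0.
  rewrite ltnS => jk; split; last first.
    by apply: (alternating_mul_lt0 (m := k.+1 - j)); rewrite -?subSn ?lo_sign ?hi_sign.
  case: j jk => [|j] jk /=; first by rewrite /hi /=; apply: lt_le_trans Ls _.
  rewrite /hi; case: leqP => jk'; last by apply: nth_lt; rewrite ltnSn.
  by have -> : j = k by lia.
have chained j : (j.+1 < k.+2)%N -> hi j <= lo j.+1 by rewrite !ltnS /hi /= => ->.
have [t [st ts rt] tbox] := roots_between boxes chained.
exists t => //; split => //.
  by apply: poly_of_roots_eq mQ _ rt (lt_sorted_uniq ts); rewrite sQ st.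
move=> j jk; rewrite qs -sz; apply: poly_of_roots_sign_between; rewrite ?sz //.
- by case: j jk => [|j] // jk _; have /andP[] := tbox j.+1 (leq_ltn_trans jk (ltnSn _)).
- move=> jk'; have /andP[_] := tbox j (leq_ltn_trans jk (ltnSn _)).
  by rewrite /hi -ltnS jk'.
Qed.

Lemma three_term_recurrence_roots :
  exists2 s, sorted <%R s & size s = n /\ q n = poly_of_roots s.
Proof.
have [->|n_gt0] := posnP n; first by exists [::]; rewrite // q0 /poly_of_roots big_nil.
have inter k : (k < n)%N -> interlacing k.
  by elim: k => [|k IH] kn; [exact: interlacing0 | exact: interlacingS kn (IH (ltnW kn))].
have [s ss [sz qs _]] : interlacing n.-1 by apply: inter; rewrite ltn_predL.
by exists s => //; rewrite sz -qs (prednK n_gt0).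
Qed.

End ThreeTermRecurrence.

Section Tridiagonal.
Variable T : comPzRingType.
Implicit Types (d u w : nat -> T).

Definition tridiag n d u w : 'M[T]_n :=
  \matrix_(i, j) if j == i :> nat then d i else if j == i.+1 :> nat then u i
                 else if i == j.+1 :> nat then w j else 0.

Lemma tridiag_minor_max n d u w :
  row' ord_max (col' ord_max (tridiag n.+1 d u w)) = tridiag n d u w.
Proof.
by apply/matrixP => i j; rewrite !mxE /= /bump !(leqNgt n) !ltn_ord /= !add0n.
Qed.

Lemma det_tridiagSS k d u w : \det (tridiag k.+2 d u w) =
  d k.+1 * \det (tridiag k.+1 d u w) - u k * w k * \det (tridiag k d u w).
Proof.
rewrite (expand_det_row _ ord_max) big_ord_recr /= big_ord_recr /=.
rewrite big1 ?add0r => [|i _]; last first.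
  have ik := ltn_ord i; rewrite mxE /= (ltn_eqF (leqW ik)) (ltn_eqF (leqW (leqW ik))).
  by rewrite eqSS (gtn_eqF ik) mul0r.
rewrite !mxE /= eqxx (ltn_eqF (ltnSn k)) (ltn_eqF (leqW (ltnSn k))) addrC.
congr (_ + _).
  by rewrite /cofactor tridiag_minor_max -signr_odd oddD addbb mul1r.
rewrite /cofactor /= (expand_det_col _ ord_max) big_ord_recr /=.
rewrite big1 ?add0r => [|i _]; last first.
  have ik := ltn_ord i; rewrite !mxE /= /bump (leqNgt k.+1) (leqW ik) /= leqnn add0n add1n.
  rewrite (gtn_eqF (leqW ik)) eqSS (gtn_eqF ik) (ltn_eqF (leqW (leqW ik))).
  by rewrite mul0r.
rewrite !mxE /= /bump (leqNgt k.+1) ltnSn leqnn add0n add1n eqxx (gtn_eqF (ltnSn _)).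
rewrite addSn exprS -signr_odd oddD addbb expr0 mulr1.
rewrite /cofactor -signr_odd oddD addbb expr0 mul1r.
have -> : row' ord_max (col' ord_max (row' ord_max
    (col' (widen_ord (leqnSn k.+1) ord_max) (tridiag k.+2 d u w)))) = tridiag k d u w.
  apply/matrixP => i j; rewrite !mxE /= /bump.
  have ik : (i < k)%N := ltn_ord i; have jk : (j < k)%N := ltn_ord j.
  by rewrite !(leqNgt k) !(ltnNge k) ik (ltnW ik) /= ?jk ?add0n.
by rewrite mulN1r mulrN mulrA [w k * u k]mulrC.
Qed.

End Tridiagonal.

Lemma Ppoly_tridiag (R : comNzRingType) l (mu : R) : Ppoly l mu =
  \det (tridiag l (fun i => 'X + (- (i * (l - i))%:R)%:P) (fun i => (mu * i.+1%:R)%:P)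
                  (fun j => (mu * (l - j.+1)%:R)%:P)).
Proof.
congr (\det _); apply/matrixP => i j; rewrite !mxE.
case: (eqVneq i j) => [<-|ij]; first by rewrite !eqxx mulr1n.
have ji : (j == i :> nat) = false by apply/eqP => /val_inj ji; rewrite ji eqxx in ij.
by rewrite ji mulr0n add0r; case: eqP => // _; case: eqP => // ->.
Qed.

Lemma Ppoly_real_rooted (R : rcfType) l (mu : R) : 0 < mu ->
  exists2 s, sorted <%R s & size s = l /\ Ppoly l mu = poly_of_roots s.
Proof.
move=> mu_gt0; rewrite Ppoly_tridiag.
pose q k := \det (tridiag k (fun i => 'X + (- (i * (l - i))%:R)%:P)
  (fun i => (mu * i.+1%:R)%:P) (fun j => (mu * (l - j.+1)%:R)%:P)).
apply: (three_term_recurrence_roots (q := q) (a := fun i => - (i * (l - i))%:R)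
  (b := fun k => mu * k.+1%:R * (mu * (l - k.+1)%:R))).
- exact: det_mx00.
- by rewrite /q det_mx11 mxE.
- by move=> k _; rewrite /q det_tridiagSS -!polyCM.
- by move=> k kl; rewrite !mulr_gt0 // ltr0n subn_gt0.
Qed.

Lemma rootsR_Ppoly (R : rcfType) l (mu : R) : 0 < mu ->
  [/\ sorted <%R (rootsR (Ppoly l mu)), size (rootsR (Ppoly l mu)) = l &
      Ppoly l mu = poly_of_roots (rootsR (Ppoly l mu))].
Proof.
move=> mu_gt0; have [s ss [sz ->]] := Ppoly_real_rooted l mu_gt0.
by rewrite rootsR_poly_of_roots.
Qed.

Lemma map_Ppoly (R S : comNzRingType) (f : {rmorphism R -> S}) l (mu : R) :
  map_poly f (Ppoly l mu) = Ppoly l (f mu).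
Proof.
rewrite /Ppoly -det_map_mx; congr (\det _); apply/matrixP => i j.
rewrite !mxE rmorphD rmorphMn /= map_polyX map_polyC /=.
by do 3 (case: ifP => _; rewrite ?rmorphN ?rmorphM ?rmorph_nat ?rmorph0 //).
Qed.

Lemma Pl_Ppoly (R : comNzRingType) l (lam mu : R) : Pl l lam mu = (Ppoly l mu).[lam].
Proof.
rewrite /Pl /Ppoly -horner_evalE -det_map_mx; congr (\det _); apply/matrixP => i j.
by rewrite !mxE rmorphD rmorphMn /= horner_evalE hornerX horner_evalE hornerC addrC.
Qed.

Lemma horner2_map (R : comNzRingType) (u : {poly {poly R}}) (x y : R) :
  u.[x, y] = (map_poly (horner_eval y) u).[x].
Proof. by rewrite -[in RHS](hornerC x y) -horner_evalE horner_map. Qed.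

Lemma horner2_Ppoly (R : comNzRingType) l (lam mu : R) :
  (Ppoly l 'X).[lam, mu] = (Ppoly l mu).[lam].
Proof. by rewrite horner2_map map_Ppoly /= horner_evalE hornerX. Qed.

Lemma horner2_deriv_Ppoly (R : comNzRingType) l (lam mu : R) :
  (Ppoly l 'X)^`().[lam, mu] = (Ppoly l mu)^`().[lam].
Proof. by rewrite horner2_map -deriv_map map_Ppoly /= horner_evalE hornerX. Qed.

(** * Continuity of simple real roots *)

(* Each root of [p y0] is enclosed in a box [(s y0)_j -+ d] across which [p y0]
   changes sign; the sign changes persist for [y] near [y0], and then the
   [j]-th root of [p y] must lie in the [j]-th box. *)
Lemma continuous_nth_root (R : realType) (p : R -> {poly R}) (s : R -> seq R) n y0 i :
  (forall x, {for y0, continuous (fun y => (p y).[x])}) ->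
  (\forall y \near y0, [/\ sorted <%R (s y), size (s y) = n & p y = poly_of_roots (s y)]) ->
  (i < n)%N -> {for y0, continuous (fun y => (s y)`_i)}.
Proof.
move=> p_cont near_s i_n; have [ss0 sz0 ps0] := nbhs_singleton near_s.
apply/cvgrPdist_lt => e e_gt0; have [d [d_gt0 d_le gap]] := sorted_gap e_gt0 ss0.
pose box_sign j y := (p y).[(s y0)`_j - d] * (p y).[(s y0)`_j + d].
have signs : \forall y \near y0, forall j : 'I_n, box_sign j y < 0.
  have := @filter_forall _ 'I_n (fun j y => box_sign j y < 0) (nbhs y0) _; apply => j.
  apply: cvgr_lt (cvgM (p_cont _) (p_cont _)) _ _.
  by rewrite ps0 poly_of_roots_box_sign // sz0.
near=> y.
have [ss sz ps] : [/\ sorted <%R (s y), size (s y) = n & p y = poly_of_roots (s y)].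
  by near: y.
have sgn : forall j : 'I_n, box_sign j y < 0 by near: y.
have /andP[lo hi] : (s y0)`_i - d < (s y)`_i < (s y0)`_i + d.
  apply: (poly_of_roots_in_boxes (lo := fun j => (s y0)`_j - d)
                                 (hi := fun j => (s y0)`_j + d)); rewrite ?sz //.
  - move=> j jn; split; first by lra.
    by rewrite -ps; apply: (sgn (Ordinal jn)).
  - by move=> j jn; rewrite ltW // gap ?sz0.
rewrite ltr_distlC; apply/andP; split.
  by apply: le_lt_trans lo; rewrite lerD2l lerN2.
by apply: lt_le_trans hi _; rewrite lerD2l.
Unshelve. all: by end_near.
Qed.

(** * Implicit differentiation of a simple root *)

Section Bivariate.
Variable R : realType.
Implicit Types (u v : {poly {poly R}}) (c : {poly R}) (x y : R).

Definition derivY u : {poly {poly R}} := map_poly deriv u.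

Lemma horner2_MXaddC u c x y : (u * 'X + c%:P).[x, y] = u.[x, y] * x + c.[y].
Proof. by rewrite hornerMXaddC hornerD hornerM !hornerC. Qed.

Lemma derivY_MXaddC u c : derivY (u * 'X + c%:P) = derivY u * 'X + (c^`())%:P.
Proof.
apply/polyP => -[|i]; rewrite /derivY coef_map !coefD !coefMX !coefC /=.
  by rewrite !add0r.
by rewrite !addr0 coef_map.
Qed.

Lemma cvg_horner2 u {T} (F : set_system T) {FF : Filter F} (xt yt : T -> R) x y :
  xt @ F --> x -> yt @ F --> y -> (fun t => u.[xt t, yt t]) @ F --> u.[x, y].
Proof.
move=> xtx yty; elim/poly_ind: u => [|u c IH].
  by rewrite !horner0; under eq_fun do rewrite !horner0; exact: cvg_cst.
rewrite horner2_MXaddC; under eq_fun do rewrite horner2_MXaddC.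
apply: cvgD; first exact: cvgM.
by apply: continuous_cvg yty; exact: continuous_horner.
Qed.

Lemma is_derive_horner2 u (g : R -> R) y dg : is_derive y 1 g dg ->
  is_derive y 1 (fun z => u.[g z, z]) (u^`().[g y, y] * dg + (derivY u).[g y, y]).
Proof.
move=> gy; elim/poly_ind: u => [|u c IH].
  rewrite deriv0 /derivY map_poly0 !horner0 mul0r addr0.
  by under eq_fun do rewrite !horner0; exact: is_derive_cst.
under eq_fun do rewrite horner2_MXaddC.
rewrite derivMXaddC derivY_MXaddC hornerD hornerM horner2_MXaddC hornerX.
apply: is_derive_eq (is_deriveD (is_deriveM IH gy) (is_derive_poly c y)) _.
by rewrite hornerD hornerM hornerC /GRing.scale /=; ring.
Qed.

Lemma horner2_factor u x0 : exists v,
  (forall x y, u.[x, y] = u.[x0, y] + (x - x0) * v.[x, y]) /\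
  (forall y, v.[x0, y] = u^`().[x0, y]).
Proof.
have : root (u - (u.[x0%:P])%:P) x0%:P by rewrite rootE hornerD hornerN hornerC subrr.
case/factor_theorem => v uv; exists v; split => [x y|y].
- have := congr1 (fun p => p.[x, y]) uv; rewrite /= !hornerE => e.
  by rewrite mulrC -e addrC subrK.
- have := congr1 (fun p => p^`().[x0, y]) uv.
  by rewrite /= derivB derivC subr0 derivM derivXsubC mulr1 !hornerE subrr mulr0 add0r.
Qed.

End Bivariate.

Lemma is_derive1_quotientP (R : realType) (f : R -> R) (x l : R) :
  is_derive x 1 f l <-> (fun h => h^-1 * (f (h + x) - f x)) @ 0^' --> l.
Proof.
have -> : (fun h => h^-1 * (f (h + x) - f x)) =
          (fun h => h^-1 *: ((f \o shift x) (h *: 1) - f x)).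
  by apply/funext => h; rewrite /= [h *: 1]mulr1.
split=> [[df <-]|fl]; first exact: df.
by apply: DeriveDef; [apply/cvg_ex; exists l | exact: cvg_lim].
Qed.

(* The quotient rule for [a * c^-k], where [a' = aX f' + aY], [c' = cX f' + cY]
   and [f' = - uY / c]. *)
Lemma deriv_implicit_term_identity (R : fieldType) (k : nat) (c a aX aY cX cY uY : R) :
  c != 0 ->
  a * ((k%:R * c^-1 ^+ k.-1) * (- c ^- 2 * (cX * (- uY / c) + cY))) +
  c^-1 ^+ k * (aX * (- uY / c) + aY) =
  ((aY * c - aX * uY) * c - a * (cY * c - cX * uY) *+ k) * c^-1 ^+ k.+2.
Proof.
move=> c0; case: k => [|k] /=; first by rewrite mulr0n !mul0r mulr0 subr0 add0r; field.
by rewrite !exprS; field.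
Qed.

Section ImplicitFunction.
Variables (R : realType) (u : {poly {poly R}}) (D : set R) (f : R -> R).
Hypotheses (D_open : open D) (f_cont : forall y, D y -> {for y, continuous f})
  (f_root : forall y, D y -> u.[f y, y] = 0)
  (f_simple : forall y, D y -> u^`().[f y, y] != 0).

Let near_D y : D y -> \forall z \near y, D z.
Proof. by move=> Dy; apply: open_nbhs_nbhs. Qed.

Lemma implicit_is_derive y : D y ->
  is_derive y 1 f (- (derivY u).[f y, y] / u^`().[f y, y]).
Proof.
move=> Dy; have [v [uv vy]] := horner2_factor u (f y).
pose quot_mu h := h^-1 * (u.[f y, h + y] - u.[f y, y]).
pose slope h := v.[f (h + y), h + y].
have shift_y : (fun h => h + y) @ 0^' --> y.
  apply: cvg_within_filter.
  by apply: cvg_trans (cvgD cvg_id (cvg_cst y)) _; rewrite add0r.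
have quot_mu_lim : quot_mu @ 0^' --> (derivY u).[f y, y].
  have := is_derive_horner2 u (is_derive_cst (f y) y 1).
  by rewrite mulr0 add0r => /is_derive1_quotientP.
have slope_lim : slope @ 0^' --> u^`().[f y, y].
  have f_lim : (fun h => f (h + y)) @ 0^' --> f y := cvg_comp _ _ shift_y (f_cont Dy).
  by rewrite -vy; exact: (cvg_horner2 (u := v) f_lim shift_y).
apply/is_derive1_quotientP.
apply: cvg_trans (cvgM (cvgN quot_mu_lim) (cvgV (f_simple Dy) slope_lim)).
apply: near_eq_cvg; near=> h.
have slope_neq0 : slope h != 0 by near: h; exact: cvgr_neq0 slope_lim (f_simple Dy).
have root_h : u.[f (h + y), h + y] = 0 by apply: f_root; near: h; exact/shift_y/near_D.
(* Both points lie on the curve: (f (h + y) - f y) * slope h = - (u.[f y, h + y] - u.[f y, y]). *)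
have := uv (f (h + y)) (h + y); rewrite root_h => /eqP.
rewrite eq_sym addr_eq0 => /eqP e.
rewrite -[LHS]/(- quot_mu h / slope h) /quot_mu /slope (f_root Dy) subr0 e.
by rewrite mulrN opprK mulrA mulfK.
Unshelve. all: by end_near.
Qed.

Definition implicit_term (A : {poly {poly R}}) (k : nat) (y : R) : R :=
  A.[f y, y] * (u^`().[f y, y])^-1 ^+ k.

Definition implicit_term_deriv (A : {poly {poly R}}) (k : nat) : {poly {poly R}} :=
  (derivY A * u^`() - A^`() * derivY u) * u^`()
  - (A * (derivY u^`() * u^`() - u^`()^`() * derivY u)) *+ k.

Lemma is_derive_implicit_term A k y : D y ->
  is_derive y 1 (implicit_term A k) (implicit_term (implicit_term_deriv A k) k.+2 y).
Proof.
move=> Dy; have f' := implicit_is_derive Dy.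
have dA := is_derive_horner2 A f'.
have du' := is_derive_horner2 u^`() f'.
have dinv := is_deriveX k (is_deriveV (f := fun z => u^`().[f z, z]) (f_simple Dy) du').
have -> : implicit_term A k = (fun z => A.[f z, z]) * (fun z => (u^`().[f z, z])^-1) ^+ k.
  by rewrite exprfctE.
apply: is_derive_eq (is_deriveM dA dinv) _.
rewrite exprfctE /implicit_term /implicit_term_deriv !(hornerD, hornerN, hornerM, hornerMn).
exact: deriv_implicit_term_identity (f_simple Dy).
Qed.

Lemma derive1n_implicit_term n :
  exists A k, forall y, D y -> derive1n n f y = implicit_term A k y.
Proof.
elim: n => [|n [A [k IH]]].
  by exists 'X, 0%N => y _; rewrite derive1n0 /implicit_term expr0 mulr1 hornerX hornerC.
exists (implicit_term_deriv A k), k.+2 => y Dy; rewrite derive1nS derive1E.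
apply: derive_val; apply: near_eq_is_derive (is_derive_implicit_term A k Dy).
by near=> z; rewrite IH //; near: z; exact: near_D.
Unshelve. all: by end_near.
Qed.

Lemma implicit_smooth n y : D y -> derivable (derive1n n f) y 1.
Proof.
move=> Dy; have [A [k fnE]] := derive1n_implicit_term n.
apply: ex_derive; apply: near_eq_is_derive (is_derive_implicit_term A k Dy).
by near=> z; rewrite fnE //; near: z; exact: near_D.
Unshelve. all: by end_near.
Qed.

End ImplicitFunction.

(** * The branches of Gamma_l *)

Section Branches.
Variables (R : realType) (l : nat).

Definition branch (i : nat) (mu : R) : R := (rootsR (Ppoly l mu))`_i.

Lemma root_Ppoly (lam mu : R) : 0 < mu ->
  root (Ppoly l mu) lam = (lam \in rootsR (Ppoly l mu)).
Proof. by case/(rootsR_Ppoly l) => _ _ {1}->; rewrite root_poly_of_roots. Qed.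

Lemma deriv_Ppoly_neq0 (lam mu : R) : 0 < mu ->
  root (Ppoly l mu) lam -> (Ppoly l mu)^`().[lam] != 0.
Proof.
move=> mu_gt0; move: (rootsR_Ppoly l mu_gt0); set s := rootsR _ => -[ss _ ->].
by rewrite root_poly_of_roots; apply: deriv_poly_of_roots_neq0; exact: lt_sorted_uniq.
Qed.

Lemma root_Ppoly_branch i (mu : R) :
  (i < l)%N -> 0 < mu -> root (Ppoly l mu) (branch i mu).
Proof.
move=> il mu_gt0; rewrite root_Ppoly // mem_nth //.
by case: (rootsR_Ppoly l mu_gt0) => _ ->.
Qed.

Lemma branch_continuous i (mu : R) :
  (i < l)%N -> 0 < mu -> {for mu, continuous (branch i)}.
Proof.
move=> il mu_gt0; apply: (continuous_nth_root (p := Ppoly l)) il.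
  move=> x; have -> : (fun y => (Ppoly l y).[x]) = horner (Ppoly l 'X).[x%:P].
    by apply/funext => y; rewrite -horner2_Ppoly.
  exact: continuous_horner.
by near=> y; apply: rootsR_Ppoly; near: y; exact: lt_nbhsr.
Unshelve. all: by end_near.
Qed.

Lemma branch_smooth i n (mu : R) :
  (i < l)%N -> 0 < mu -> derivable (derive1n n (branch i)) mu 1.
Proof.
move=> il; apply: (implicit_smooth (u := Ppoly l 'X) (D := [set y | 0 < y])).
- exact: open_gt.
- by move=> y y_gt0; exact: branch_continuous.
- by move=> y y_gt0; rewrite horner2_Ppoly; apply/rootP/root_Ppoly_branch.
- by move=> y y_gt0; rewrite horner2_deriv_Ppoly deriv_Ppoly_neq0 ?root_Ppoly_branch.
Qed.

End Branches.

Theorem lemma1p6 (R : realType) (l : nat) :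
  exists f : 'I_l -> R -> R,
    (* each curve is the graph lambda = f i mu of a smooth (C^oo) function of mu > 0 *)
    (forall (i : 'I_l) (n : nat) (mu : R), 0 < mu -> derivable (derive1n n (f i)) mu 1) /\
    (* the curves are pairwise non-intersecting *)
    (forall (i j : 'I_l) (mu : R), 0 < mu -> (i < j)%N -> f i mu < f j mu) /\
    (* their union is exactly Gamma_l(R) intersected with {mu > 0} *)
    (forall lam mu : R, 0 < mu -> (Pl l lam mu = 0 <-> exists i : 'I_l, lam = f i mu)) /\
    (* no horizontal tangent {mu = const}: every point of Gamma_l(R) with mu > 0
       is a regular point with d/dlambda P_l(lambda, mu^2) <> 0 *)
    (forall lam mu : R, 0 < mu -> Pl l lam mu = 0 -> dPl_dlam l lam mu != 0).
Proof.
exists (fun i : 'I_l => branch l i); split; [|split; [|split]].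
- by move=> i n mu mu_gt0; exact: branch_smooth.
- move=> i j mu mu_gt0 ij; have [ss sz _] := rootsR_Ppoly l mu_gt0.
  by rewrite /branch (lt_sorted_ltn_nth 0 ss) ?inE ?sz.
- move=> lam mu mu_gt0; rewrite Pl_Ppoly; split => [/rootP|[i ->]].
    have [_ sz _] := rootsR_Ppoly l mu_gt0.
    rewrite root_Ppoly // => /(nthP 0)[i]; rewrite sz => il <-.
    by exists (Ordinal il).
  exact/rootP/root_Ppoly_branch.
- by move=> lam mu mu_gt0; rewrite Pl_Ppoly => /rootP; exact: deriv_Ppoly_neq0.
Qed.
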